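(* Let $\Gamma$ be an elliptic graph with NN-elliptic sequence $\{B_j\}_{j=-1}^m$ (with the convention $B_{m+1}=\emptyset$). Assume $\Gamma_{new}$ is obtained from $\Gamma$ by attaching new vertices $v_1,\dots,v_s$ ($s\ge1$), each joined by a single edge to a fixed vertex $v_0\in\mathcal V(\Gamma)$ and to no other vertex, and that $\Gamma_{new}$ is an elliptic graph. Then (a) $v_0\in\mathcal V(B_{-1})\setminus\mathcal V(B_1)$; (b) the $E_{v_0}$-coefficient of $Z_{min}^\Gamma$ is $1$; (c) $(Z^\Gamma_{min},E_{v_0})_\Gamma\le1-s$. Furthermore, if $v_0\in\mathcal V(B_0)\setminus\mathcal V(B_1)$ then $v_0$ is an end-vertex (valency-one vertex) of $B_0$.
   Context: For a decorated tree $G$ (vertex set $\mathcal V(G)$, integer decorations $e_v$, genera zero, negative definite form $(\,,\,)_G$ on $L(G)=\mathbb Z\langle E_v\rangle$ with $(E_v,E_v)=e_v$, $(E_v,E_w)=1$ for adjacent $v\ne w$, $0$ otherwise) let $L'(G)$ be the dual lattice, $[l']$ the class in $L'(G)/L(G)$, $Z_K^G$ with $(Z_K^G,E_v)=e_v+2$, $\chi(l')=-(l',l'-Z_K^G)/2$; $\ge$ coordinatewise, $l>0$ if $l\ge0,l\ne0$, $|l'|$ the support. $\mathcal S'(G)=\{l':(l',E_v)\le0\ \forall v\}$, $s_h=\min\{l'\in\mathcal S'(G):[l']=h\}$; $Z^G_{min}$ is the minimal nonzero element of $\mathcal S'(G)\cap L(G)$, similarly $Z_{min}(B)$ for a connected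 full subgraph $B$. Elliptic graph: $e_v\le-2$ for all $v$ and $\min_{l\in L(G),l>0}\chi(l)=0$. NN-elliptic sequence: $B_{-1}=G$, $Z_{B_{-1}}=s_{[Z^G_K]}$, $B_0=|Z^G_K-s_{[Z^G_K]}|$; for $j\ge0$, $Z_{B_j}=Z_{min}(B_j)$, and if $Z^G_K-\sum_{i=-1}^jZ_{B_i}\ne0$ then $B_{j+1}=|Z^G_K-\sum_{i=-1}^jZ_{B_i}|$; $m$ is the index with $Z^G_K=\sum_{i=-1}^mZ_{B_i}$. *)

From HB Require Import structures.
From mathcomp Require Import all_boot all_order all_algebra.
Set Implicit Arguments. Unset Strict Implicit. Unset Printing Implicit Defensive.
Import Order.TTheory GRing.Theory Num.Theory.
Local Open Scope ring_scope.

Section Plumbing.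
Variable T : finType.
Variable adj : rel T.
Variable e : T -> int.         (* decorations e_v; all genera are zero *)

(* Elements of L(G) (x) Q are functions T -> rat: l = sum_v l(v) E_v. *)

Definition imat (u v : T) : rat :=
  if u == v then (e u)%:~R else if adj u v then 1 else 0.

Definition form (x y : T -> rat) : rat :=
  \sum_(u : T) \sum_(v : T) x u * y v * imat u v.

Definition pairE (x : T -> rat) (v : T) : rat := \sum_(u : T) x u * imat u v.

Definition decorated_tree : Prop :=
  [/\ symmetric adj, irreflexive adj, (0 < #|T|)%N,
      (forall u v, connect adj u v) &
      #|[set p : T * T | adj p.1 p.2]| = (2 * (#|T| - 1))%N] /\
      (forall x : T -> rat, (exists v, x v != 0) -> form x x < 0).

Definition inL (x : T -> rat) : Prop := forall v, x v \is a Num.int.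
Definition inL' (x : T -> rat) : Prop := forall v, pairE x v \is a Num.int.
Definition same_class (x y : T -> rat) : Prop := inL (fun v => x v - y v).

Definition vle (x y : T -> rat) : Prop := forall v, x v <= y v.
Definition vpos (x : T -> rat) : Prop := vle (fun _ => 0) x /\ exists v, x v != 0.
Definition support (x : T -> rat) : {set T} := [set v | x v != 0].

Definition is_ZK (z : T -> rat) : Prop := forall v, pairE z v = (e v)%:~R + 2.

Definition chi (ZK x : T -> rat) : rat := - form x (fun v => x v - ZK v) / 2.

Definition inS' (x : T -> rat) : Prop := inL' x /\ forall v, pairE x v <= 0.

Definition is_s_class (y x : T -> rat) : Prop :=
  [/\ inS' x, same_class x y &
      forall x', inS' x' -> same_class x' y -> vle x x'].

(* x = Z_min(B) for a (connected full) subgraph with vertex set B: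
   the minimal nonzero element of S'(B) /\ L(B), elements of L(B) being the
   elements of L(G) supported on B.  For B = setT this is Z_min^G. *)
Definition is_Zmin (B : {set T}) (x : T -> rat) : Prop :=
  let P := fun y : T -> rat =>
    [/\ inL y, support y \subset B, exists v, y v != 0 &
        forall v, v \in B -> pairE y v <= 0] in
  P x /\ forall y, P y -> vle x y.

Definition elliptic : Prop :=
  (forall v, e v <= -2) /\
  exists ZK, [/\ is_ZK ZK,
    (forall l, inL l -> vpos l -> 0 <= chi ZK l) &
    (exists l, [/\ inL l, vpos l & chi ZK l = 0])].

(* NN-elliptic sequence, shifted by one: B k = B_{k-1}, Z k = Z_{B_{k-1}}
   for k = 0 .. m+1, and B (m+2) = B_{m+1} = emptyset (convention). *)
Definition NN_elliptic_seq (m : nat) (B : nat -> {set T}) (Z : nat -> T -> rat)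
  : Prop :=
  exists ZK, [/\ is_ZK ZK, B 0%N = setT & is_s_class ZK (Z 0%N)] /\ [/\
    (forall k, (1 <= k <= m.+2)%N ->
        B k = support (fun v => ZK v - \sum_(i < k) Z i v)),
    (forall k, (1 <= k <= m.+1)%N -> is_Zmin (B k) (Z k)),
    (forall k, (k <= m)%N -> exists v, ZK v - \sum_(i < k.+1) Z i v != 0) &
    (forall v, ZK v = \sum_(i < m.+2) Z i v)].

End Plumbing.

(* Gamma_new: attach s new vertices (inr i), each joined only to v0. *)
Definition new_adj (T : finType) (adj : rel T) (s : nat) (v0 : T)
  : rel (T + 'I_s)%type :=
  fun a b => match a, b with
    | inl u, inl v => adj u v
    | inl u, inr _ => u == v0
    | inr _, inl v => v == v0
    | inr _, inr _ => false
    end.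

Definition new_dec (T : finType) (e : T -> int) (s : nat) (f : 'I_s -> int)
  : (T + 'I_s)%type -> int :=
  fun a => match a with inl u => e u | inr i => f i end.

From Pilot Require Import Defs.
From HB Require Import structures.
From mathcomp Require Import all_boot all_order all_algebra.
Import Order.TTheory GRing.Theory Num.Theory.
Local Open Scope ring_scope.
From mathcomp Require Import ring lra zify.
Set Implicit Arguments. Unset Strict Implicit. Unset Printing Implicit Defensive.

(* By adjunction chi(x) = (sum_u x_u (e_u + 2) - (x, x)) / 2, and
   extending a cycle a >= 0 of Gamma by 1 on the new vertices gives
   chi_new = chi(a) + s (1 - a_v0).  Ellipticity of Gamma_new thus forces
   a_v0 <= 1 whenever chi(a) <= 0.  This applies to Z_min (chi(Z_min) <= 0 by
   Laufer's algorithm started from a cycle with chi = 0), which is >= 1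
   everywhere, and to Z_min + E_v0, giving (Z_min, E_v0) <= 1 - s.  It also
   applies to Y = Z_K - s_[Z_K] = sum_(j >= 0) Z_(B_j), since
   chi(Y) = (Y, s_[Z_K]) / 2 <= 0; as Z_(B_0) >= 1 on B_0, v0 cannot lie in
   B_1.  If v0 is in B_0 \ B_1 then Y_v0 = 1 and chi(Y) = 0, so Y satisfies
   the adjunction equalities on B_0; the part of Y on one branch of the tree
   at v0 then has chi = (part, E_v0) / 2, and integrality of chi leaves room
   for a single branch meeting B_0. *)

Section Tree.
Variable T : finType.

Definition edges (r : rel T) : {set T * T} := [set p : T * T | r p.1 p.2].

(* Grow a set A one vertex at a time along an edge leaving A; each step
   contributes two new ordered edges inside A. *)
Lemma connected_card_edges (r : rel T) :
  symmetric r -> (forall u v, connect r u v) -> (2 * (#|T| - 1) <= #|edges r|)%N.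
Proof.
move=> rs rc; case: (posnP #|T|) => [-> //|T0].
pose inner (A : {set T}) := [set p : T * T | [&& r p.1 p.2, p.1 \in A & p.2 \in A]].
suff grow k : (k < #|T|)%N -> exists A : {set T}, #|A| = k.+1 /\ (2 * k <= #|inner A|)%N.
  have [A [_ eA]] := grow #|T|.-1 ltac:(by rewrite ltn_predL).
  rewrite subn1; apply: leq_trans eA (subset_leq_card _); apply/subsetP => p.
  by rewrite !inE => /andP [].
elim: k => [|k IH] hk.
  by have [x0 _] := card_gt0P T0; exists [set x0]; rewrite cards1.
have [A [cA eA]] := IH (ltnW hk).
have [b bA] : exists b, b \notin A.
  apply/existsP; apply: contraTT hk => /existsPn Afull.
  suff AT : A = setT by rewrite -leqNgt -cA AT cardsT.
  by apply/setP => x; rewrite in_setT; apply/negbNE.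
have [a aA] : exists a, a \in A by apply/card_gt0P; rewrite cA.
have /existsP [x /existsP [y /and3P [xA yA rxy]]] :
    [exists x, exists y, [&& x \in A, y \notin A & r x y]].
  apply: contraT => /existsPn leave.
  have Aclosed : closed r (mem A).
    move=> x y rxy /=; apply/idP/idP => hx.
      by apply: contraNT (leave x) => hy; apply/existsP; exists y; rewrite hx hy.
    by apply: contraNT (leave y) => hy; apply/existsP; exists x; rewrite hx hy rs.
  by move: (closed_connect Aclosed (rc a b)); rewrite aA (negbTE bA).
exists (y |: A); split; first by rewrite cardsU1 yA cA.
have xy_new : [set (x, y); (y, x)] \subset inner (y |: A).
  apply/subsetP => p; rewrite !inE => /orP [] /eqP -> /=.
    by rewrite rxy eqxx xA orbT.
  by rewrite rs rxy eqxx xA orbT.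
have xy_out : inner A :&: [set (x, y); (y, x)] = set0.
  apply/setP => -[p1 p2]; rewrite !inE /=.
  apply/negP => /andP [/and3P [_ h1 h2] /orP [] /eqP [E1 E2]];
    by move: yA; rewrite -?E1 -?E2 ?h1 ?h2.
have xy_neq : (x, y) != (y, x) by apply: contraNneq yA => -[<-].
apply: leq_trans (subset_leq_card (_ : inner A :|: [set (x, y); (y, x)] \subset _)).
  by rewrite cardsU xy_out cards0 subn0 cards2 xy_neq mulnSr leq_add2r.
rewrite subUset xy_new andbT; apply/subsetP => p.
by rewrite !inE => /and3P [-> -> ->]; rewrite !orbT.
Qed.

Variable adj : rel T.
Hypothesis adj_sym : symmetric adj.
Hypothesis adj_irr : irreflexive adj.
Hypothesis adj_connect : forall u v, connect adj u v.
Hypothesis card_edges_adj : #|edges adj| = (2 * (#|T| - 1))%N.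

Lemma tree_bridge a b : adj a b ->
  ~~ connect [rel x y | adj x y && ~~ ((x == a) && (y == b) || (x == b) && (y == a))] a b.
Proof.
move=> ab; apply/negP => bridged.
set r := [rel x y | _] in bridged.
have r_sym : symmetric r.
  by move=> x y; rewrite /= adj_sym orbC (andbC (x == b)) (andbC (x == a)).
have r_connect u v : connect r u v.
  apply: connect_sub (adj_connect u v) => x y xy.
  case: (boolP ((x == a) && (y == b) || (x == b) && (y == a))); last first.
    by move=> xy_ab; apply: connect1; rewrite /= xy xy_ab.
  by case/orP => /andP [/eqP -> /eqP ->]; rewrite // (sym_connect_sym r_sym).
have ab_neq : (a, b) != (b, a) by apply: contraTneq ab => -[->]; rewrite adj_irr.
have split_edges : edges r :|: [set (a, b); (b, a)] \subset edges adj.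
  rewrite subUset; apply/andP; split; apply/subsetP => p; rewrite !inE.
    by case/andP.
  by case/orP => /eqP -> //=; rewrite adj_sym.
have disj : edges r :&: [set (a, b); (b, a)] = set0.
  apply/setP => -[x y]; rewrite !inE /=.
  apply/negP => /andP [/andP [_ /negP removed]] /orP [] /eqP [xa yb];
    by apply: removed; rewrite xa yb !eqxx ?orbT.
have := subset_leq_card split_edges.
rewrite cardsU disj cards0 subn0 cards2 ab_neq card_edges_adj.
have := connected_card_edges r_sym r_connect; lia.
Qed.

Lemma tree_split v0 u1 u2 : adj v0 u1 -> adj v0 u2 -> u1 != u2 ->
  exists D : {set T}, [/\ u1 \in D, u2 \notin D, v0 \notin D &
    forall a b, a \in D -> adj a b -> b != v0 -> b \in D].
Proof.
move=> v0u1 v0u2 u12.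
have u1v0 : u1 != v0 by apply: contraTneq v0u1 => ->; rewrite adj_irr.
have u2v0 : u2 != v0 by apply: contraTneq v0u2 => ->; rewrite adj_irr.
pose avoid := [rel a b | [&& adj a b, a != v0 & b != v0]].
pose D := [set x | connect avoid u1 x].
have v0D : v0 \notin D.
  have avoid_closed : closed avoid [pred x | x != v0].
    by move=> x y /and3P [_ xv0 yv0]; rewrite !inE xv0 yv0.
  by rewrite inE; apply/negP => /(closed_connect avoid_closed); rewrite !inE u1v0 eqxx.
exists D; split => //.
- by rewrite inE connect0.
- have u1v0_adj : adj u1 v0 by rewrite adj_sym.
  rewrite inE; apply: contraNN (tree_bridge u1v0_adj) => u1u2.
  apply: (connect_trans (connect_sub _ u1u2)); last first.
    by apply: connect1; rewrite /= adj_sym v0u2 (negbTE u2v0) eq_sym (negbTE u12).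
  move=> x y /and3P [xy xv0 yv0]; apply: connect1.
  by rewrite /= xy (negbTE xv0) (negbTE yv0) !andbF.
- move=> a b; rewrite !inE => u1a ab bv0.
  apply: (connect_trans u1a); apply: connect1; rewrite /= ab bv0 andbT.
  by apply: contraNneq v0D => <-; rewrite inE.
Qed.

End Tree.

Lemma int_gt0_ge1 (R : archiNumDomainType) (x : R) : x \is a Num.int -> 0 < x -> 1 <= x.
Proof. by move=> xi x_gt0; rewrite -[x]gtr0_norm ?norm_intr_ge1 ?gt_eqF. Qed.

Lemma triangular_int (R : archiNumFieldType) (x : R) :
  x \is a Num.int -> x * (x - 1) / 2 \is a Num.int.
Proof.
have nat_tri k : (k%:R * (k%:R - 1) / 2 : R) \is a Num.int.
  elim: k => [|k IH]; first by rewrite !mul0r.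
  have -> : ((k.+1)%:R * ((k.+1)%:R - 1) / 2 : R) = k%:R * (k%:R - 1) / 2 + k%:R.
    by rewrite -natr1; field.
  by rewrite rpredD ?rpred_nat.
case/intrP => -[k|k] ->; first exact: nat_tri.
have -> : ((Negz k)%:~R * ((Negz k)%:~R - 1) / 2 : R) =
    (k.+2)%:R * ((k.+2)%:R - 1) / 2.
  by rewrite NegzE mulrNz -[(k.+2)%:R]natr1 -[(k.+1)%:R]natr1; field.
exact: nat_tri.
Qed.

Section Form.
Variables (T : finType) (adj : rel T) (e : T -> int).
Hypothesis adj_sym : symmetric adj.

Local Notation imat := (imat adj e).
Local Notation form := (Defs.form adj e).
Local Notation pairE := (Defs.pairE adj e).

Lemma imatC u v : imat u v = imat v u.
Proof. by rewrite /Defs.imat eq_sym adj_sym; case: eqVneq => [->|]. Qed.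

Lemma imat_ge0 u v : u != v -> 0 <= imat u v.
Proof. by rewrite /Defs.imat => /negbTE ->; case: adj. Qed.

Lemma imat_int u v : imat u v \is a Num.int.
Proof. by rewrite /Defs.imat; case: eqP => _; [exact: intr_int | case: adj]. Qed.

Lemma formE x y : form x y = \sum_u x u * pairE y u.
Proof.
rewrite /Defs.form; apply: eq_bigr => u _; rewrite /Defs.pairE big_distrr.
by apply: eq_bigr => v _ /=; rewrite imatC mulrA.
Qed.

Lemma form_sym x y : form x y = form y x.
Proof.
rewrite /Defs.form exchange_big; apply: eq_bigr => u _; apply: eq_bigr => v _.
by rewrite imatC; ring.
Qed.

Lemma eq_pairE x y : x =1 y -> pairE x =1 pairE y.
Proof. by move=> xy v; apply: eq_bigr => u _; rewrite xy. Qed.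

Lemma eq_form x x' y y' : x =1 x' -> y =1 y' -> form x y = form x' y'.
Proof. by move=> xx' yy'; apply: eq_bigr => u _; apply: eq_bigr => v _; rewrite xx' yy'. Qed.

Lemma pairED x y u : pairE (fun v => x v + y v) u = pairE x u + pairE y u.
Proof. by rewrite /Defs.pairE -big_split; apply: eq_bigr => v _; rewrite mulrDl. Qed.

Lemma pairEB x y u : pairE (fun v => x v - y v) u = pairE x u - pairE y u.
Proof. by rewrite /Defs.pairE -sumrB; apply: eq_bigr => v _; rewrite mulrBl. Qed.

Lemma pairEZ c x u : pairE (fun v => c * x v) u = c * pairE x u.
Proof. by rewrite /Defs.pairE big_distrr; apply: eq_bigr => v _ /=; rewrite mulrA. Qed.

Lemma pairE_int x u : inL x -> pairE x u \is a Num.int.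
Proof. by move=> xi; apply: rpred_sum => v _; rewrite rpredM ?imat_int. Qed.

Lemma form_int x y : inL x -> inL y -> form x y \is a Num.int.
Proof. by move=> xi yi; rewrite formE; apply: rpred_sum => u _; rewrite rpredM ?pairE_int. Qed.

Lemma form_addr x y z : form x (fun v => y v + z v) = form x y + form x z.
Proof. by rewrite !formE -big_split; apply: eq_bigr => u _; rewrite pairED mulrDr. Qed.

Lemma form_subr x y z : form x (fun v => y v - z v) = form x y - form x z.
Proof. by rewrite !formE -sumrB; apply: eq_bigr => u _; rewrite pairEB mulrBr. Qed.

Lemma form_addl x y z : form (fun v => x v + y v) z = form x z + form y z.
Proof. by rewrite form_sym form_addr !(form_sym z). Qed.

(* chi with (x, Z_K) expanded by adjunction, so that no Z_K is needed. *)
Definition chi_dec (x : T -> rat) : rat :=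
  (\sum_u x u * ((e u)%:~R + 2) - form x x) / 2.

Lemma chi_decE ZK x : is_ZK adj e ZK -> chi adj e ZK x = chi_dec x.
Proof.
move=> ZKE; rewrite /chi /chi_dec form_subr (formE x ZK).
under eq_bigr => u _ do rewrite ZKE.
by rewrite mulNr -mulNr opprB.
Qed.

Lemma eq_chi_dec x y : x =1 y -> chi_dec x = chi_dec y.
Proof.
move=> xy; rewrite /chi_dec (eq_form xy xy).
by congr ((_ - _) / _); apply: eq_bigr => u _; rewrite xy.
Qed.

Lemma chi_dec0 : chi_dec (fun _ => 0) = 0.
Proof.
rewrite /chi_dec formE !big1 ?subrr ?mul0r // => u _; exact: mul0r.
Qed.

Lemma chi_decD x y : chi_dec (fun v => x v + y v) = chi_dec x + chi_dec y - form x y.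
Proof.
rewrite /chi_dec form_addl !form_addr (form_sym y x).
have -> : \sum_u (x u + y u) * ((e u)%:~R + 2) =
    \sum_u x u * ((e u)%:~R + 2) + \sum_u y u * ((e u)%:~R + 2).
  by rewrite -big_split; apply: eq_bigr => u _; rewrite mulrDl.
by field.
Qed.

Definition Ev (w : T) : T -> rat := fun u => (u == w)%:R.

Lemma sum_Ev w (F : T -> rat) : \sum_u Ev w u * F u = F w.
Proof.
rewrite (bigD1 w) //= /Ev eqxx mul1r big1 ?addr0 // => u /negbTE ->.
exact: mul0r.
Qed.

Lemma Ev_int w : inL (Ev w).
Proof. by move=> u; rewrite /Ev; case: (u == w). Qed.

Lemma form_Evl w x : form (Ev w) x = pairE x w.
Proof. by rewrite formE sum_Ev. Qed.

Lemma form_Evr x w : form x (Ev w) = pairE x w.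
Proof. by rewrite form_sym form_Evl. Qed.

Lemma chi_dec_Ev w : chi_dec (Ev w) = 1.
Proof. by rewrite /chi_dec form_Evl /Defs.pairE sum_Ev sum_Ev /Defs.imat eqxx; field. Qed.

Lemma chi_dec_addEv x w : chi_dec (fun u => x u + Ev w u) = chi_dec x + 1 - pairE x w.
Proof. by rewrite chi_decD chi_dec_Ev form_Evr. Qed.

Lemma chi_dec_scaleEv c w :
  chi_dec (fun u => c * Ev w u) = c - (e w)%:~R * (c * (c - 1) / 2).
Proof.
have sum_cEv F : \sum_u c * Ev w u * F u = c * F w.
  by rewrite -(sum_Ev w (fun u => c * F u)); apply: eq_bigr => u _; ring.
rewrite /chi_dec formE !sum_cEv pairEZ /Defs.pairE sum_Ev /Defs.imat eqxx.
by field.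
Qed.

Lemma chi_dec_int x : inL x -> chi_dec x \is a Num.int.
Proof.
move=> xi.
suff part r : chi_dec (fun u => \sum_(a <- r) x a * Ev a u) \is a Num.int.
  rewrite (eq_chi_dec (y := fun u => \sum_(a <- enum T) x a * Ev a u)) ?part // => u.
  by rewrite big_enum /=; under eq_bigr => a _ do rewrite mulrC /Ev eq_sym; rewrite sum_Ev.
elim: r => [|a r IH].
  by rewrite (eq_chi_dec (y := fun _ => 0)) ?chi_dec0 // => u; rewrite big_nil.
rewrite (eq_chi_dec (y := fun u => x a * Ev a u + \sum_(b <- r) x b * Ev b u)); last first.
  by move=> u; rewrite big_cons.
have summand_int b : inL (fun v => x b * Ev b v) by move=> v; rewrite rpredM ?Ev_int.
rewrite chi_decD chi_dec_scaleEv rpredB ?rpredD // ?form_int //.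
  by rewrite rpredN rpredM ?intr_int ?triangular_int.
by move=> u; apply: rpred_sum => b _; exact: summand_int.
Qed.

End Form.

Section Laufer.
Variables (T : finType) (adj : rel T) (e : T -> int).
Hypothesis adj_sym : symmetric adj.

Local Notation pairE := (Defs.pairE adj e).
Local Notation chi_dec := (chi_dec adj e).

Variable y : T -> rat.
Hypothesis yi : inL y.
Hypothesis y_antinef : forall v, pairE y v <= 0.

Lemma laufer_step x v : inL x -> vle x y -> 0 < pairE x v ->
  [/\ vle (fun u => x u + Ev v u) y,
      chi_dec (fun u => x u + Ev v u) <= chi_dec x &
      \sum_u (y u - (x u + Ev v u)) = \sum_u (y u - x u) - 1].
Proof.
move=> xi xy xv_gt0; split.
- move=> u; rewrite /Ev; case: (eqVneq u v) => [->|]; last by rewrite addr0.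
  rewrite -lerBrDl int_gt0_ge1 ?rpredB // subr_gt0 lt_neqAle xy andbT.
  apply: contraTneq xv_gt0 => xyv; rewrite -leNgt (le_trans _ (y_antinef v)) //.
  apply: ler_sum => t _; case: (eqVneq t v) => [->|tv]; first by rewrite xyv.
  by rewrite ler_wpM2r ?imat_ge0.
- rewrite chi_dec_addEv // lerBlDr lerD2l int_gt0_ge1 //; exact: pairE_int.
- by rewrite -(sum_Ev v (fun=> 1)) -sumrB; apply: eq_bigr => u _; rewrite mulr1; ring.
Qed.

(* Laufer's algorithm: repeatedly add E_v where (x, E_v) > 0; y bounds the run. *)
Lemma laufer x : inL x -> vle x y ->
  exists x', [/\ inL x', vle x x', forall v, pairE x' v <= 0 & chi_dec x' <= chi_dec x].
Proof.
move=> xi xy; have [k] : exists k : nat, \sum_u (y u - x u) <= k%:R.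
  exists (Num.bound (\sum_u (y u - x u))); apply/ltW/archi_boundP.
  by apply: sumr_ge0 => u _; rewrite subr_ge0.
elim: k x xi xy => [|k IH] x xi xy dist_le.
all: have [/existsP [v xv_gt0]|/existsPn x_antinef] := boolP [exists v, 0 < pairE x v];
  last by exists x; split=> // u; rewrite ?lexx // leNgt x_antinef.
all: have [xEv_le_y chi_le dist_dec] := laufer_step xi xy xv_gt0.
  have : 0 <= \sum_u (y u - (x u + Ev v u)) by apply: sumr_ge0 => u; rewrite subr_ge0.
  by rewrite dist_dec; lra.
have xEv_i : inL (fun u => x u + Ev v u) by move=> u; rewrite rpredD ?Ev_int.
have [|x' [x'i xx' x'_antinef chi_x']] := IH _ xEv_i xEv_le_y.
  by rewrite dist_dec; move: dist_le; rewrite -natr1; lra.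
exists x'; split=> // [u|].
  by apply: le_trans (xx' u); rewrite lerDl /Ev; case: (u == v).
exact: le_trans chi_le.
Qed.

End Laufer.

Section NegativeDefinite.
Variables (T : finType) (adj : rel T) (e : T -> int).
Hypothesis adj_sym : symmetric adj.
Hypothesis adj_irr : irreflexive adj.
Hypothesis negdef : forall x : T -> rat, (exists v, x v != 0) -> Defs.form adj e x x < 0.

Local Notation imat := (imat adj e).
Local Notation form := (Defs.form adj e).
Local Notation pairE := (Defs.pairE adj e).
Local Notation chi_dec := (chi_dec adj e).

(* With y = p - n split into positive and negative parts, (n, p) >= 0 and
   (n, n) < 0 give (n, y) > 0, while (n, y) <= 0 because n lives inside B. *)
Lemma antinef_ge0 (B : {set T}) y : Defs.support y \subset B ->
  (forall v, v \in B -> pairE y v <= 0) -> forall v, 0 <= y v.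
Proof.
move=> yB y_antinef; apply/forallP; apply: contraT => /forallPn [w].
rewrite -ltNge => yw_lt0.
pose n v := if y v < 0 then - y v else 0.
pose p v := if y v < 0 then 0 else y v.
have n_lt0 : form n n < 0 by apply: negdef; exists w; rewrite /n yw_lt0 oppr_eq0 lt_eqF.
have ny_le0 : form n y <= 0.
  rewrite formE //; apply: sumr_le0 => u _; rewrite /n; case: ifP => yu; last by rewrite mul0r.
  have : pairE y u <= 0 by apply: y_antinef; apply: (subsetP yB); rewrite inE lt_eqF.
  nra.
have np_ge0 : 0 <= form n p.
  apply: sumr_ge0 => u _; apply: sumr_ge0 => v _; rewrite /n /p.
  case: (eqVneq u v) => [<-|uv]; first by case: ifP; rewrite ?mulr0 ?mul0r.
  apply: mulr_ge0; last exact: imat_ge0.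
  by case: ifP; case: ifP; rewrite ?mulr0 ?mul0r // => /negbT; rewrite -leNgt => yv /ltW;
    rewrite -oppr_ge0 => yu; apply: mulr_ge0.
have : form n y = form n p - form n n.
  rewrite -form_subr //; apply: eq_form => // v.
  by rewrite /n /p; case: ifP; rewrite ?opprK ?subr0 ?add0r.
lra.
Qed.

Lemma pairE_at_zero_ge0 y v : (forall w, 0 <= y w) -> y v = 0 ->
  forall w, 0 <= y w * imat w v.
Proof.
move=> y_ge0 yv w; case: (eqVneq w v) => [->|wv]; first by rewrite yv mul0r.
by rewrite mulr_ge0 ?imat_ge0.
Qed.

Lemma antinef_zero_nbr y u v : (forall w, 0 <= y w) -> y v = 0 -> pairE y v <= 0 ->
  adj u v -> y u = 0.
Proof.
move=> y_ge0 yv yv_le0 uv.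
have terms_ge0 := pairE_at_zero_ge0 y_ge0 yv.
have sum0 : pairE y v = 0 by apply/eqP; rewrite eq_le yv_le0 sumr_ge0.
have := psumr_eq0P (fun w _ => terms_ge0 w) sum0 (isT : xpredT u).
have u_neq_v : u != v by apply: contraTneq uv => ->; rewrite adj_irr.
by rewrite /Defs.imat (negbTE u_neq_v) uv mulr1.
Qed.

Hypothesis adj_connect : forall u v, connect adj u v.

Lemma Zmin_ge1 Z : is_Zmin adj e setT Z -> forall v, 1 <= Z v.
Proof.
case=> [[Zi _ [w Zw] Z_antinef] _] v.
have Z_ge0 := antinef_ge0 (subsetT _) Z_antinef.
have zeros_closed : closed adj [pred v | Z v == 0].
  move=> x y xy /=; apply/eqP/eqP => Z0.
    by apply: (antinef_zero_nbr Z_ge0 Z0 (Z_antinef x (in_setT x))); rewrite adj_sym.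
  exact: (antinef_zero_nbr Z_ge0 Z0 (Z_antinef y (in_setT y))).
have := closed_connect zeros_closed (adj_connect v w); rewrite !inE (negbTE Zw) => Zv.
by rewrite int_gt0_ge1 // lt_def Zv Z_ge0.
Qed.

(* Otherwise Z_min^G restricted to the zeros of Y in B lies in S'(B); minimality
   of Y then forces Y = 0. *)
Lemma Zmin_sub_ge1 (B : {set T}) Y Z : is_Zmin adj e setT Z -> is_Zmin adj e B Y ->
  forall v, v \in B -> 1 <= Y v.
Proof.
move=> Zmin_G [[Yi YB [w Yw] Y_antinef] Y_min] v vB.
have Z_ge1 := Zmin_ge1 Zmin_G.
case: Zmin_G => [[Zi _ _ Z_antinef] _].
have Y_ge0 := antinef_ge0 YB Y_antinef.
case: (eqVneq (Y v) 0) => [Yv0|Yv]; last by rewrite int_gt0_ge1 // lt_def Yv Y_ge0.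
pose N := [set u in B | Y u == 0].
pose x u := if u \in N then Z u else 0.
have xi : inL x by move=> u; rewrite /x; case: ifP.
have xB : Defs.support x \subset B.
  apply/subsetP => u; rewrite inE /x; case: ifP => [|_]; last by rewrite eqxx.
  by rewrite inE => /andP [].
have xv : x v != 0 by rewrite /x inE vB Yv0 eqxx /= gt_eqF // (lt_le_trans ltr01).
have x_antinef u : u \in B -> pairE x u <= 0.
  move=> uB; case: (boolP (u \in N)) => uN.
    apply: le_trans (Z_antinef u (in_setT u)); apply: ler_sum => t _.
    rewrite /x; case: ifP => tN //; rewrite mul0r mulr_ge0 ?imat_ge0 //.
      by rewrite (le_trans ler01).
    by apply: contraFneq tN => ->.
  apply: sumr_le0 => t _; rewrite /x; case: ifP => tN; last by rewrite mul0r.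
  have tu : t != u by apply: contraTneq tN => ->.
  rewrite /Defs.imat (negbTE tu); case: ifP => tu_adj; last by rewrite mulr0.
  move: tN uN; rewrite !inE => /andP [tB /eqP Yt] /nandP [/negP //|/negP []].
  by apply/eqP/(antinef_zero_nbr Y_ge0 Yt (Y_antinef t tB)); rewrite adj_sym.
have := Y_min x (And4 xi xB (ex_intro _ v xv) x_antinef) w.
rewrite /x; case: ifP => [|_ Yw_le0]; first by rewrite inE (negbTE Yw) andbF.
by move: Yw; rewrite eq_le Yw_le0 Y_ge0.
Qed.

(* Run Laufer's algorithm from a cycle l with chi(l) = 0 below a multiple of Z;
   it ends at some x' >= Z, and chi(x') >= chi(Z) since x' - Z >= 0 and Z is antinef. *)
Lemma chi_Zmin_le0 Z : elliptic adj e -> is_Zmin adj e setT Z -> chi_dec Z <= 0.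
Proof.
case=> _ [ZK [ZKE chi_ge0 [l [li [l_ge0 [w lw]] chi_l]]]] Zmin_G.
rewrite chi_decE // in chi_l.
have {}chi_ge0 x : inL x -> vpos x -> 0 <= chi_dec x.
  by rewrite -(chi_decE adj_sym _ ZKE); exact: chi_ge0.
have Z_ge1 := Zmin_ge1 Zmin_G; case: Zmin_G => [[Zi _ _ Z_antinef] Z_min].
pose K := \sum_u l u.
have l_le_K u : l u <= K by rewrite /K (bigD1 u) //= lerDl sumr_ge0.
pose y u := K * Z u.
have yi : inL y by move=> u; rewrite rpredM // rpred_sum.
have y_antinef v : pairE y v <= 0.
  by rewrite pairEZ mulr_ge0_le0 ?sumr_ge0 ?Z_antinef ?in_setT.
have ly : vle l y.
  move=> u; apply: le_trans (l_le_K u) _.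
  by rewrite /y ler_peMr ?sumr_ge0 ?Z_ge1.
have [x' [x'i lx' x'_antinef chi_x']] := laufer adj_sym yi y_antinef li ly.
have Zx' : vle Z x'.
  apply: Z_min; split=> //.
  by exists w; rewrite gt_eqF // (lt_le_trans _ (lx' w)) // lt_def lw l_ge0.
have chi_diff_ge0 : 0 <= chi_dec (fun u => x' u - Z u).
  case: (boolP [exists u, x' u - Z u != 0]) => [/existsP [u xZu]|/existsPn xZ0].
    apply: chi_ge0 => [v|]; first by rewrite rpredB.
    by split; [move=> v; rewrite subr_ge0 | exists u].
  have -> : chi_dec (fun u => x' u - Z u) = chi_dec (fun _ => 0).
    by apply: eq_chi_dec => u; apply/eqP; rewrite -[_ == _]negbK xZ0.
  by rewrite chi_dec0.
have form_le0 : form Z (fun u => x' u - Z u) <= 0.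
  rewrite form_sym // formE //; apply: sumr_le0 => u _.
  by rewrite mulr_ge0_le0 ?subr_ge0 ?Z_antinef ?in_setT.
have /= := chi_decD e adj_sym Z (fun u => x' u - Z u).
have -> : chi_dec (fun u => Z u + (x' u - Z u)) = chi_dec x'.
  by apply: eq_chi_dec => u; rewrite addrC subrK.
lra.
Qed.

End NegativeDefinite.

Section AttachVertices.
Variables (T : finType) (adj : rel T) (e : T -> int).
Variables (s : nat) (v0 : T) (f : 'I_s -> int).

Local Notation T' := (T + 'I_s)%type.
Local Notation adj' := (@new_adj T adj s v0).
Local Notation e' := (new_dec e f).
Local Notation imat' := (imat adj' e').

Definition attach_ones (a : T -> rat) : T' -> rat :=
  fun p => if p is inl v then a v else 1.

Lemma chi_dec_attach_ones a :
  chi_dec adj' e' (attach_ones a) = chi_dec adj e a + s%:R * (1 - a v0).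
Proof.
have old_new : \sum_(u : T) \sum_(i < s) a u * 1 * imat' (inl u) (inr i) = s%:R * a v0.
  rewrite (bigD1 v0) //= [X in _ + X]big1 => [|u uv0]; last first.
    by apply: big1 => i _; rewrite /imat /= (negbTE uv0) mulr0.
  under eq_bigr => i _ do rewrite /imat /= eqxx !mulr1.
  by rewrite addr0 sumr_const card_ord mulr_natl.
have new_old : \sum_(i < s) \sum_(v : T) 1 * a v * imat' (inr i) (inl v) = s%:R * a v0.
  rewrite -old_new exchange_big; apply: eq_bigr => u _; apply: eq_bigr => i _.
  by rewrite /imat /= mul1r mulr1.
have new_new :
    \sum_(i < s) \sum_(j < s) 1 * 1 * imat' (inr i) (inr j) = \sum_(i < s) (f i)%:~R.
  apply: eq_bigr => i _; rewrite (bigD1 i) //= big1 ?addr0 => [|j ji].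
    by rewrite /imat /= eqxx !mul1r.
  by rewrite /imat /= (inj_eq inr_inj) eq_sym (negbTE ji) mulr0.
have old_old : \sum_(u : T) \sum_(v : T) a u * a v * imat' (inl u) (inl v) =
    Defs.form adj e a a by [].
rewrite /chi_dec {1}/Defs.form !big_sumType /=.
under [X in _ - (X + _)]eq_bigr => u _ do rewrite big_sumType /=.
under [X in _ - (_ + X)]eq_bigr => i _ do rewrite big_sumType /=.
rewrite !big_split /= old_old old_new new_old new_new.
have -> : \sum_(i < s) 1 * ((f i)%:~R + 2) = \sum_(i < s) (f i)%:~R + s%:R * 2 :> rat.
  by under eq_bigr do rewrite mul1r; rewrite big_split /= sumr_const card_ord mulr_natl.
by field.
Qed.

Lemma attach_chi_ge0 : (0 < s)%N -> symmetric adj' -> elliptic adj' e' ->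
  forall a, inL a -> (forall v, 0 <= a v) -> 0 <= chi_dec adj e a + s%:R * (1 - a v0).
Proof.
move=> s_gt0 adj'_sym [_ [ZK' [ZK'E chi'_ge0 _]]] a ai a_ge0.
rewrite -chi_dec_attach_ones -(chi_decE adj'_sym _ ZK'E); apply: chi'_ge0.
  by case=> [v|i] /=; [exact: ai | exact: rpred1].
split; first by case=> [v|i] /=; [exact: a_ge0 | exact: ler01].
by exists (inr (Ordinal s_gt0)); exact: oner_neq0.
Qed.

End AttachVertices.

Section Branches.
Variables (T : finType) (adj : rel T) (e : T -> int).
Hypothesis adj_sym : symmetric adj.
Hypothesis adj_irr : irreflexive adj.

Local Notation form := (Defs.form adj e).
Local Notation pairE := (Defs.pairE adj e).
Local Notation chi_dec := (chi_dec adj e).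

Variables (Y : T -> rat) (v0 : T).
Hypothesis Y_adjunction : forall u, Y u != 0 -> pairE Y u = (e u)%:~R + 2.

Definition restrict (D : {set T}) u := if u \in D then Y u else 0.

Lemma chi_restrict D :
  chi_dec (restrict D) = form (restrict D) (fun u => Y u - restrict D u) / 2.
Proof.
rewrite /chi_dec form_subr // [form _ Y]formE //; congr ((_ - _) / 2).
apply: eq_bigr => u _; rewrite /restrict; case: ifP => _; last by rewrite !mul0r.
by case: (eqVneq (Y u) 0) => [->|/Y_adjunction ->]; rewrite ?mul0r.
Qed.

Hypothesis Yv0 : Y v0 = 1.

Lemma chi_restrict_branch (D : {set T}) : v0 \notin D ->
    (forall a b, a \in D -> adj a b -> b != v0 -> b \in D) ->
  chi_dec (restrict D) = pairE (restrict D) v0 / 2.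
Proof.
move=> v0D D_closed; rewrite chi_restrict formE //; congr (_ / 2).
apply: eq_bigr => u _; rewrite /restrict; case: ifP => uD; last by rewrite !mul0r.
congr (_ * _); rewrite imatC // /Defs.pairE (bigD1 v0) //= (negbTE v0D) subr0 Yv0 mul1r.
rewrite big1 ?addr0 // => w wv0; case: ifP => wD; first by rewrite subrr mul0r.
rewrite subr0 /Defs.imat; case: (eqVneq w u) => [wu|wu]; first by rewrite wu uD in wD.
case: ifP => wu_adj; last exact: mulr0.
have uw_adj : adj u w by rewrite adj_sym.
by rewrite (D_closed u w uD uw_adj wv0) in wD.
Qed.

Hypothesis Y_ge0 : forall u, 0 <= Y u.
Hypothesis Yi : inL Y.

Lemma pairE_restrict_ge1 (D : {set T}) u : v0 \notin D -> u \in D -> adj v0 u -> Y u != 0 ->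
  1 <= pairE (restrict D) v0.
Proof.
move=> v0D uD v0u Yu.
have uv0 : u != v0 by apply: contraTneq v0u => ->; rewrite adj_irr.
rewrite /Defs.pairE (bigD1 u) //= {1}/restrict uD /Defs.imat (negbTE uv0) adj_sym v0u.
rewrite mulr1 -[1]addr0; apply: lerD; first by rewrite int_gt0_ge1 // lt_def Yu Y_ge0.
apply: sumr_ge0 => w _.
rewrite /restrict; case: ifP => wD; last by rewrite mul0r.
by rewrite mulr_ge0 ?imat_ge0 //; apply: contraTneq wD => ->.
Qed.

Hypothesis adj_connect : forall u v, connect adj u v.
Hypothesis card_edges_adj : #|edges adj| = (2 * (#|T| - 1))%N.

(* Y = E_v0 + X with chi(Y) = 0 forces (X, E_v0) = 2; splitting X along two
   branches at v0 gives pieces with (piece, E_v0) >= 1, hence one piece with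
   chi = 1/2, which is not an integer. *)
Lemma support_nbrs_card1 : #|[set u in Defs.support Y | adj v0 u]| = 1%N.
Proof.
pose X := restrict [set~ v0].
have X_branch : chi_dec X = pairE X v0 / 2.
  by apply: chi_restrict_branch => [|a b _ _ bv0]; rewrite !inE ?eqxx ?bv0.
have chiY0 : chi_dec Y = 0.
  have YT : restrict setT =1 Y by move=> u; rewrite /restrict in_setT.
  rewrite -(eq_chi_dec adj e YT) chi_restrict.
  have -> : form (restrict setT) (fun u => Y u - restrict setT u) = form Y (fun _ => 0).
    by apply: eq_form => // u; rewrite YT subrr.
  by rewrite /Defs.form big1 ?mul0r // => u _; rewrite big1 // => w _; rewrite mulr0 mul0r.
have X2 : pairE X v0 = 2.
  have Y_split : Y =1 (fun u => Ev v0 u + X u).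
    move=> u; rewrite /X /restrict /Ev !inE.
    by case: eqVneq => [->|]; rewrite ?Yv0 ?addr0 ?add0r.
  move: chiY0; rewrite (eq_chi_dec adj e Y_split) chi_decD // chi_dec_Ev //.
  by rewrite form_Evl // -/X X_branch; lra.
have [u1 u1N] : exists u1, u1 \in [set u in Defs.support Y | adj v0 u].
  apply/set0Pn/negP => /eqP N0.
  suff : pairE X v0 = 0 by rewrite X2 => /eqP; rewrite pnatr_eq0.
  rewrite /Defs.pairE big1 // => u _; rewrite /X /restrict !inE.
  case: (eqVneq u v0) => [->|uv0] /=; first by rewrite mul0r.
  case: (boolP (adj v0 u)) => v0u.
    have : u \notin [set u in Defs.support Y | adj v0 u] by rewrite N0 inE.
    by rewrite !inE v0u andbT negbK => /eqP ->; rewrite mul0r.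
  by rewrite /Defs.imat (negbTE uv0) adj_sym (negbTE v0u) mulr0.
suff -> : [set u in Defs.support Y | adj v0 u] = [set u1] by rewrite cards1.
apply/setP => u2; rewrite in_set1; apply/idP/eqP => [u2N|->//].
apply: contraTeq isT; rewrite eq_sym => u12.
move: u1N u2N; rewrite !inE => /andP [Yu1 v0u1] /andP [Yu2 v0u2].
have [D [u1D u2D v0D D_closed]] :=
  tree_split adj_sym adj_irr adj_connect card_edges_adj v0u1 v0u2 u12.
pose D' := ~: (v0 |: D).
have X_split : X =1 (fun u => restrict D u + restrict D' u).
  move=> u; rewrite /X /restrict !inE; case: (eqVneq u v0) => [->|uv0] /=.
    by rewrite (negbTE v0D) addr0.
  by case: (boolP (u \in D)); rewrite ?addr0 ?add0r.
have D_ge1 := pairE_restrict_ge1 v0D u1D v0u1 Yu1.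
have D'_ge1 : 1 <= pairE (restrict D') v0.
  have u2v0 : u2 != v0 by apply: contraTneq v0u2 => ->; rewrite adj_irr.
  apply: (pairE_restrict_ge1 _ _ v0u2 Yu2); rewrite !inE ?eqxx //.
  by rewrite (negbTE u2v0) (negbTE u2D).
have D_eq1 : pairE (restrict D) v0 = 1.
  by move: X2; rewrite (eq_pairE adj e X_split) pairED; lra.
have restrict_int : inL (restrict D) by move=> u; rewrite /restrict; case: ifP.
have := chi_dec_int e adj_sym restrict_int.
rewrite chi_restrict_branch // D_eq1 => half_int.
suff : (1 : rat) <= 1 / 2 by lra.
by apply: int_gt0_ge1 => //; lra.
Qed.

End Branches.

Section NNSequence.
Variables (T : finType) (adj : rel T) (e : T -> int).
Hypothesis adj_sym : symmetric adj.
Hypothesis negdef : forall x : T -> rat, (exists v, x v != 0) -> Defs.form adj e x x < 0.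

Local Notation pairE := (Defs.pairE adj e).
Local Notation chi_dec := (chi_dec adj e).

Lemma chi_dec_defect Y W : (forall u, pairE Y u = (e u)%:~R + 2 - pairE W u) ->
  chi_dec Y = (\sum_u Y u * pairE W u) / 2.
Proof.
move=> YW; rewrite /chi_dec formE // -sumrB; congr (_ / 2).
by apply: eq_bigr => u _; rewrite YW; ring.
Qed.

Lemma adjunction_on_support Y W : (forall u, pairE Y u = (e u)%:~R + 2 - pairE W u) ->
    (forall u, 0 <= Y u) -> (forall u, pairE W u <= 0) -> chi_dec Y = 0 ->
  forall u, Y u != 0 -> pairE Y u = (e u)%:~R + 2.
Proof.
move=> YW Y_ge0 W_antinef chiY0 u Yu.
suff W0 : pairE W u = 0 by rewrite YW W0 subr0.
have terms_le0 v : 0 <= - (Y v * pairE W v) by rewrite oppr_ge0 mulr_ge0_le0.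
have sum0 : \sum_v - (Y v * pairE W v) = 0.
  by rewrite sumrN; move: chiY0; rewrite (chi_dec_defect YW); lra.
have := psumr_eq0P (fun v _ => terms_le0 v) sum0 (isT : xpredT u).
by move/eqP; rewrite oppr_eq0 mulf_eq0 (negbTE Yu) => /eqP.
Qed.

Variables (m : nat) (B : nat -> {set T}) (Z : nat -> T -> rat).
Hypothesis NN : NN_elliptic_seq adj e m B Z.

(* Zsum 1 = Z_K - s_[Z_K] and Zsum 2 = Z_K - s_[Z_K] - Z_min(B_0). *)
Definition Zsum k (v : T) := \sum_(k <= i < m.+2) Z i v.

Lemma NN_support k : (1 <= k <= m.+2)%N -> B k = Defs.support (Zsum k).
Proof.
case: NN => ZK [_ [BE _ _ ZK_sum]] k_range; rewrite BE //; apply/setP => v.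
rewrite !inE ZK_sum /Zsum -!(big_mkord xpredT (fun i => Z i v)).
rewrite (@big_cat_nat _ _ _ k) //=; last by case/andP: k_range.
by rewrite addrAC subrr add0r.
Qed.

Lemma NN_Zmin i : (1 <= i <= m.+1)%N -> is_Zmin adj e (B i) (Z i).
Proof. by case: NN => _ [_ [_ Zmin _ _]] /Zmin. Qed.

Lemma NN_Z_ge0 i : (1 <= i <= m.+1)%N -> forall v, 0 <= Z i v.
Proof.
move=> /NN_Zmin [[_ ZB _ Z_antinef] _].
exact: antinef_ge0 adj_sym negdef _ _ ZB Z_antinef.
Qed.

Lemma NN_Z_int i : (1 <= i <= m.+1)%N -> inL (Z i).
Proof. by case/NN_Zmin => -[]. Qed.

Lemma NN_Zsum_ge0 k : (0 < k)%N -> forall v, 0 <= Zsum k v.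
Proof.
move=> k_gt0 v; rewrite /Zsum big_nat_cond; apply: sumr_ge0 => i /andP [/andP [ki im] _].
by apply: NN_Z_ge0; lia.
Qed.

Lemma NN_Zsum_int k : (0 < k)%N -> inL (Zsum k).
Proof.
move=> k_gt0 v; rewrite /Zsum big_nat_cond; apply: rpred_sum => i /andP [/andP [ki im] _].
by apply: NN_Z_int; lia.
Qed.

Lemma NN_Z0_antinef u : pairE (Z 0%N) u <= 0.
Proof. by case: NN => ZK [[_ _ [[_ Z0_antinef] _ _]] _]. Qed.

Lemma NN_Zsum1_adjunction u : pairE (Zsum 1%N) u = (e u)%:~R + 2 - pairE (Z 0%N) u.
Proof.
case: NN => ZK [[ZKE _ _] [_ _ _ ZK_sum]]; rewrite -ZKE -pairEB; apply: eq_pairE => v.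
by rewrite ZK_sum -(big_mkord xpredT (fun i => Z i v)) big_ltn // addrAC subrr add0r.
Qed.

Lemma NN_chi_Zsum1_le0 : chi_dec (Zsum 1%N) <= 0.
Proof.
rewrite (chi_dec_defect NN_Zsum1_adjunction) pmulr_lle0 ?invr_gt0 //.
by apply: sumr_le0 => u _; rewrite mulr_ge0_le0 ?NN_Zsum_ge0 ?NN_Z0_antinef.
Qed.

End NNSequence.

Section EllipticAttachment.
Variables (T : finType) (adj : rel T) (e : T -> int).
Hypothesis adj_sym : symmetric adj.
Hypothesis adj_irr : irreflexive adj.
Hypothesis negdef : forall x : T -> rat, (exists v, x v != 0) -> Defs.form adj e x x < 0.

Local Notation pairE := (Defs.pairE adj e).
Local Notation chi_dec := (chi_dec adj e).

Variables (s : nat) (v0 : T).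
Hypothesis s_gt0 : (0 < s)%N.
Hypothesis attach_ge0 :
  forall a, inL a -> (forall v, 0 <= a v) -> 0 <= chi_dec a + s%:R * (1 - a v0).

Lemma attach_v0_le1 a : inL a -> (forall v, 0 <= a v) -> chi_dec a <= 0 -> a v0 <= 1.
Proof.
move=> ai a_ge0 chi_le0; have := attach_ge0 ai a_ge0.
have : 1 <= s%:R :> rat by rewrite ler1n.
nra.
Qed.

Hypothesis adj_connect : forall u v, connect adj u v.
Variable Zm : T -> rat.
Hypothesis Zm_min : is_Zmin adj e setT Zm.
Hypothesis chi_Zm : chi_dec Zm <= 0.

Lemma Zmin_v0_eq1 : Zm v0 = 1.
Proof.
have Zm_ge1 := Zmin_ge1 adj_sym adj_irr negdef adj_connect Zm_min.
case: Zm_min => [[Zm_int _ _ _] _].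
apply/eqP; rewrite eq_le Zm_ge1 andbT attach_v0_le1 // => v.
exact: le_trans ler01 (Zm_ge1 v).
Qed.

Lemma pairE_Zmin_v0 : pairE Zm v0 <= 1 - s%:R.
Proof.
have Zm_ge1 := Zmin_ge1 adj_sym adj_irr negdef adj_connect Zm_min.
case: Zm_min => [[Zm_int _ _ _] _].
have := @attach_ge0 (fun u => Zm u + Ev v0 u).
rewrite chi_dec_addEv // /Ev eqxx Zmin_v0_eq1.
have -> : 1 + 1 = 2 :> rat by [].
have nonneg u : 0 <= Zm u + Ev v0 u by rewrite addr_ge0 ?(le_trans ler01 (Zm_ge1 u)) /Ev.
move=> /(_ (fun u => rpredD (Zm_int u) (Ev_int v0 u)) nonneg).
move: chi_Zm; lra.
Qed.

Hypothesis card_edges_adj : #|edges adj| = (2 * (#|T| - 1))%N.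
Variables (m : nat) (B : nat -> {set T}) (Z : nat -> T -> rat).
Hypothesis NN : NN_elliptic_seq adj e m B Z.

Local Notation Y := (Zsum m Z 1%N).
Local Notation R := (Zsum m Z 2%N).

Lemma NN_Zsum1_v0_le1 : Y v0 <= 1.
Proof.
have Y_ge0 := NN_Zsum_ge0 adj_sym negdef NN (isT : (0 < 1)%N).
have Y_int := NN_Zsum_int NN (isT : (0 < 1)%N).
exact: attach_v0_le1 Y_int Y_ge0 (NN_chi_Zsum1_le0 adj_sym negdef NN).
Qed.

Lemma NN_v0_notin_B2 : v0 \notin B 2%N.
Proof.
have Z1_ge0 := NN_Z_ge0 adj_sym negdef NN (isT : (1 <= 1 <= m.+1)%N).
have R_ge0 := NN_Zsum_ge0 adj_sym negdef NN (isT : (0 < 2)%N).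
have R_int := NN_Zsum_int NN (isT : (0 < 2)%N).
rewrite (NN_support NN) // inE negbK; apply: contraT => Rv0.
have R_ge1 : 1 <= R v0 by rewrite int_gt0_ge1 // lt_def Rv0 R_ge0.
have Y_split : Y v0 = Z 1%N v0 + R v0 by rewrite /Zsum big_ltn.
have v0B1 : v0 \in B 1%N.
  rewrite (NN_support NN) // inE Y_split gt_eqF // ltr_pwDr ?(lt_le_trans ltr01) //.
have Z1_min := NN_Zmin NN (isT : (1 <= 1 <= m.+1)%N).
have := Zmin_sub_ge1 adj_sym adj_irr negdef adj_connect Zm_min Z1_min v0B1.
have := NN_Zsum1_v0_le1; lra.
Qed.

Lemma NN_v0_end_vertex : v0 \in B 1%N :\: B 2%N -> #|[set u in B 1%N | adj v0 u]| = 1%N.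
Proof.
rewrite !(NN_support NN) // !inE negbK => /andP [/eqP Rv0 Yv0_ne0].
have Y_ge0 := NN_Zsum_ge0 adj_sym negdef NN (isT : (0 < 1)%N).
have Y_int := NN_Zsum_int NN (isT : (0 < 1)%N).
have Yv0 : Y v0 = 1.
  by apply/eqP; rewrite eq_le NN_Zsum1_v0_le1 int_gt0_ge1 // lt_def Yv0_ne0 Y_ge0.
have chiY : chi_dec Y = 0.
  apply/eqP; rewrite eq_le (NN_chi_Zsum1_le0 adj_sym negdef NN) /=.
  by have := attach_ge0 Y_int Y_ge0; rewrite Yv0 subrr mulr0 addr0.
have Y_adj :=
  adjunction_on_support adj_sym (NN_Zsum1_adjunction NN) Y_ge0 (NN_Z0_antinef NN) chiY.
by rewrite (support_nbrs_card1 adj_sym adj_irr Y_adj Yv0 Y_ge0 Y_int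
  adj_connect card_edges_adj).
Qed.

End EllipticAttachment.

Theorem mainTheorem13 (T : finType) (adj : rel T) (e : T -> int)
  (m : nat) (B : nat -> {set T}) (Z : nat -> T -> rat)
  (s : nat) (v0 : T) (f : 'I_s -> int) (Zmin : T -> rat) :
  decorated_tree adj e -> elliptic adj e ->
  NN_elliptic_seq adj e m B Z ->
  (1 <= s)%N ->
  decorated_tree (new_adj adj v0) (new_dec e f) ->
  elliptic (new_adj adj v0) (new_dec e f) ->
  is_Zmin adj e setT Zmin ->
  [/\ v0 \in B 0%N :\: B 2%N,
      Zmin v0 = 1,
      pairE adj e Zmin v0 <= 1 - s%:R &
      (v0 \in B 1%N :\: B 2%N ->
         #|[set u in B 1%N | adj v0 u]| = 1%N)].
Proof.
move=> [[adj_sym adj_irr _ adj_connect card_edges] negdef] ell NN s_gt0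
  [[adj'_sym _ _ _ _] _] ell' Zmin_G.
have attach := attach_chi_ge0 s_gt0 adj'_sym ell'.
have chi_Zmin := chi_Zmin_le0 adj_sym adj_irr negdef adj_connect ell Zmin_G.
have B0 : B 0%N = setT by case: NN => ZK [[_ -> _] _].
split.
- by rewrite inE B0 in_setT andbT (NN_v0_notin_B2 adj_sym adj_irr negdef s_gt0 attach
    adj_connect Zmin_G NN).
- exact (Zmin_v0_eq1 adj_sym adj_irr negdef s_gt0 attach adj_connect Zmin_G chi_Zmin).
- exact (pairE_Zmin_v0 adj_sym adj_irr negdef s_gt0 attach adj_connect Zmin_G chi_Zmin).
- exact (NN_v0_end_vertex adj_sym adj_irr negdef s_gt0 attach adj_connect card_edges NN).
Qed.
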